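(* Let $\mathbf{C}=\mathbf{C}_1\,\dot\cup\,\mathbf{C}_2$, $\mathbf{B}\in\dot{\mathbb{P}}(\mathbb{L}(\mathbf{C}_1))$ with $|\mathbf{B}|=|\mathbf{C}_1|$, and let $\mathbf{C}'$ be a finite set of binary causes with $\mathbf{C}'\cap\mathbf{C}=\varnothing$ such that potential outcomes $D_{\mathbf{C}=\mathbf{c},\mathbf{C}'=\mathbf{c}'}(\omega)$ are defined. Suppose every $X'\in\mathbf{C}'$ is not causally influenced by $\mathbf{C}$, and the relativized consistency axiom $D_{\mathbf{C}=\mathbf{c},\mathbf{C}'=\mathbf{C}'(\omega)}(\omega)=D_{\mathbf{C}=\mathbf{c}}(\omega)$ holds for all $\omega,\mathbf{c}$. If $\mathbf{B}$ is irreducible for $\mathcal{D}(\mathbf{C},\Omega)$, then $\mathbf{B}$ is irreducible for $\mathcal{D}(\mathbf{C}\cup\mathbf{C}',\Omega)$.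
   Context: An event is a binary random variable on a population $\Omega$; $\overline{X}=1-X$; $\mathbb{L}(\mathbf{C})=\mathbf{C}\cup\{\overline{X}:X\in\mathbf{C}\}$; $\dot{\mathbb{P}}(\mathbb{L}(\mathbf{C}))$ is the set of subsets of $\mathbb{L}(\mathbf{C})$ not containing both $X$ and $\overline{X}$ for any $X$; $(L)_{\mathbf{c}}$ is the value of literal $L$ under assignment $\mathbf{c}$; $\bigwedge(\mathbf{B})=\min_{L\in\mathbf{B}}L$. For a set of causes $\mathbf{C}$, potential outcomes $\mathcal{D}(\mathbf{C},\Omega)$ are values $D_{\mathbf{c}}(\omega)\in\{0,1\}$ for all $\omega\in\Omega$ and assignments $\mathbf{c}$ to $\mathbf{C}$; $\mathbf{C}'(\omega)$ denotes the actual values of $\mathbf{C}'$ for $\omega$. A variable $X'$ is not causally influenced by $\mathbf{C}$ if for every $\omega$ its potential outcomes $X'_{\mathbf{C}=\mathbf{c}}(\omega)$ do not depend on $\mathbf{c}$. A sufficient cause representation $(\mathbf{A},\mathfrak{B})$ for $\mathcal{D}(\mathbf{C},\Omega)$ is a tuple $\mathbf{A}=\langle A_1,\dots,A_p\rangle$ of binary random variables on $\Omega$ unaffected by interventions on $\mathbf{C}$ and a tuple $\mathfrak{B}=\langle\mathbf{B}_1,\dots,\mathbf{B}_p\rangle$, $\mathbf{B}_i\in\dot{\mathbb{P}}(\mathbb{L}(\mathbf{C}))$, with: for all $\omega,\mathbf{c}$, $D_{\mathbf{c}}(\omega)=1$ iff some $j$ has $A_j(\omega)=1$ and $(\bigwedge(\mathbf{B}_j))_{\mathbf{c}}=1$.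 $\mathbf{B}\in\dot{\mathbb{P}}(\mathbb{L}(\mathbf{C}))$ is irreducible for $\mathcal{D}(\mathbf{C},\Omega)$ if in every such representation some $\mathbf{B}_i\in\mathfrak{B}$ satisfies $\mathbf{B}\subseteq\mathbf{B}_i$ (and analogously with $\mathbf{C}\cup\mathbf{C}'$ in place of $\mathbf{C}$). *)

From mathcomp Require Import all_boot.
Set Implicit Arguments. Unset Strict Implicit. Unset Printing Implicit Defensive.

(* A finite set of binary causes is modelled by a finite type T of cause
   names.  A literal over T is a pair (x, b) : T * bool, where (x, true)
   stands for the event X and (x, false) for its complement 1 - X.
   L(T) is therefore T * bool, and a set of literals is a {set T * bool}. *)

Definition literal (T : finType) := (T * bool)%type.

Definition lit_val (T : finType) (l : literal T) (c : {ffun T -> bool}) : bool :=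
  if l.2 then c l.1 else ~~ c l.1.

Definition conj_val (T : finType) (B : {set literal T}) (c : {ffun T -> bool}) : bool :=
  [forall l in B, lit_val l c].

(* B is in Pdot(L(T)): it never contains both X and its complement *)
Definition consistent_lits (T : finType) (B : {set literal T}) : bool :=
  [forall x : T, ~~ (((x, true) \in B) && ((x, false) \in B))].

(* The A_j are binary random
   variables on Omega that are unaffected by interventions on the causes,
   i.e. functions of omega alone (they do not take the intervention c). *)
Definition sc_representation (T : finType) (Omega : Type)
  (D : {ffun T -> bool} -> Omega -> bool)
  (p : nat) (A : 'I_p -> Omega -> bool) (Bs : 'I_p -> {set literal T}) : Prop :=
  (forall j, consistent_lits (Bs j)) /\
  (forall (w : Omega) (c : {ffun T -> bool}),
      D c w = [exists j : 'I_p, A j w && conj_val (Bs j) c]).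

Definition irreducible (T : finType) (Omega : Type)
  (D : {ffun T -> bool} -> Omega -> bool) (B : {set literal T}) : Prop :=
  forall (p : nat) (A : 'I_p -> Omega -> bool) (Bs : 'I_p -> {set literal T}),
    sc_representation D A Bs -> exists i : 'I_p, B \subset Bs i.

(* Joint assignment to C u C' (causes indexed by the sum type TC + TC'). *)
Definition join_assign (TC TC' : finType) (c : {ffun TC -> bool})
  (c' : {ffun TC' -> bool}) : {ffun (TC + TC')%type -> bool} :=
  [ffun x => match x with inl a => c a | inr b => c' b end].

Definition lift_lits (TC TC' : finType) (B : {set literal TC})
  : {set literal (TC + TC')%type} :=
  [set ((inl l.1 : (TC + TC')%type), l.2) | l in B].

From mathcomp Require Import all_boot.

(* A set S of literals over C u C' splits into its C-part
   (projL S) and its C'-part (projR S), and the conjunction of S under a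
   joint assignment (c, c') is the conjunction of the two parts.  Given a
   sufficient cause representation (A_j, S_j) of D(C u C'), evaluate it at
   the actual values c' = C'(w) of the new causes: by relativized
   consistency this represents D(C) with conjunctions projL S_j and
   background events A_j(w) && (projR S_j)_{C'(w)}, which depend on w only.
   Irreducibility of B for D(C) yields some j with B included in projL S_j,
   i.e. with the lift of B included in S_j. *)

Section Projections.

Context {TC TC' : finType}.

Definition projL (S : {set literal (TC + TC')%type}) : {set literal TC} :=
  [set l | ((inl l.1 : (TC + TC')%type), l.2) \in S].
Definition projR (S : {set literal (TC + TC')%type}) : {set literal TC'} :=
  [set l | ((inr l.1 : (TC + TC')%type), l.2) \in S].

Lemma conj_val_join (S : {set literal (TC + TC')%type})
    (c : {ffun TC -> bool}) (c' : {ffun TC' -> bool}) :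
  conj_val S (join_assign c c') = conj_val (projL S) c && conj_val (projR S) c'.
Proof.
apply/forallP/andP => [S_c | [/forallP SL_c /forallP SR_c]].
- split; apply/forallP => -[x b]; apply/implyP; rewrite inE /= => x_in.
  + by have := S_c (inl x, b); rewrite x_in /lit_val /= ffunE.
  + by have := S_c (inr x, b); rewrite x_in /lit_val /= ffunE.
- case=> [[x|x] b]; apply/implyP => x_in.
  + by have := SL_c (x, b); rewrite inE x_in /lit_val /= ffunE.
  + by have := SR_c (x, b); rewrite inE x_in /lit_val /= ffunE.
Qed.

Lemma consistent_projL (S : {set literal (TC + TC')%type}) :
  consistent_lits S -> consistent_lits (projL S).
Proof. by move=> /forallP S_cons; apply/forallP => x; rewrite !inE; apply: S_cons. Qed.

Lemma lift_lits_sub (B : {set literal TC}) (S : {set literal (TC + TC')%type}) :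
  B \subset projL S -> lift_lits TC' B \subset S.
Proof.
move=> /subsetP B_sub; apply/subsetP => _ /imsetP [l l_in ->].
by have := B_sub l l_in; rewrite inE.
Qed.

End Projections.

Lemma restrict_representation {TC TC' : finType} {Omega : Type}
    {D1 : {ffun TC -> bool} -> Omega -> bool}
    {D2 : {ffun (TC + TC')%type -> bool} -> Omega -> bool}
    {Cp : Omega -> {ffun TC' -> bool}}
    (hcons : forall w c, D2 (join_assign c (Cp w)) w = D1 c w)
    {p : nat} {A : 'I_p -> Omega -> bool}
    {Bs : 'I_p -> {set literal (TC + TC')%type}} :
  sc_representation D2 A Bs ->
  sc_representation D1 (fun j w => A j w && conj_val (projR (Bs j)) (Cp w))
                       (fun j => projL (Bs j)).
Proof.
case=> Bs_cons D2_rep; split=> [j | w c]; first exact: consistent_projL.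
rewrite -hcons D2_rep; apply: eq_existsb => j.
by rewrite conj_val_join -andbA [conj_val (projR _) _ && _]andbC.
Qed.

Lemma irreducible_lift {TC TC' : finType} {Omega : Type}
    {D1 : {ffun TC -> bool} -> Omega -> bool}
    {D2 : {ffun (TC + TC')%type -> bool} -> Omega -> bool}
    {Cp : Omega -> {ffun TC' -> bool}}
    (hcons : forall w c, D2 (join_assign c (Cp w)) w = D1 c w)
    (B : {set literal TC}) :
  irreducible D1 B -> irreducible D2 (lift_lits TC' B).
Proof.
move=> B_irr p A Bs D2_rep.
have [i B_sub] := B_irr _ _ _ (restrict_representation hcons D2_rep).
by exists i; apply: lift_lits_sub.
Qed.

Theorem mainTheorem5
  (TC TC' : finType) (Omega : Type)
  (C1 C2 : {set TC})
  (hC12disj : C1 :&: C2 = set0) (hC12cov : C1 :|: C2 = setT)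
  (B : {set literal TC})
  (hBcons : consistent_lits B)
  (hBC1 : forall l, l \in B -> l.1 \in C1)
  (hBcard : #|B| = #|C1|)
  (D1 : {ffun TC -> bool} -> Omega -> bool)
  (D2 : {ffun (TC + TC')%type -> bool} -> Omega -> bool)
  (Cp : Omega -> {ffun TC' -> bool})
  (Cp_po : {ffun TC -> bool} -> Omega -> {ffun TC' -> bool})
  (hnoinfl : forall (c1 c2 : {ffun TC -> bool}) (w : Omega),
      Cp_po c1 w = Cp_po c2 w)
  (hcons : forall (w : Omega) (c : {ffun TC -> bool}),
      D2 (join_assign c (Cp w)) w = D1 c w) :
  irreducible D1 B -> irreducible D2 (lift_lits TC' B).
Proof. exact: irreducible_lift hcons B. Qed.
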